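(* Let $M$ be a path-connected pre-$\Delta$-monoid with identity $e$. If $\alpha_n\in\Omega(M,e)$ is a null-sequence and $\phi:\mathbb{N}\to\mathbb{N}$ is a bijection, then $\prod_{n=1}^\infty\alpha_n\simeq\prod_{n=1}^\infty\alpha_{\phi(n)}$ by a path-homotopy with image in $\mathrm{Im}\left(\prod_{n=1}^\infty\alpha_n\right)\ast\mathrm{Im}\left(\prod_{n=1}^\infty\alpha_n\right)$.
   Context: A pre-$\Delta$-monoid is a space $M$ with an associative operation $\ast$ with identity $e$ such that for any continuous paths $\alpha,\beta:[0,1]\to M$, the pointwise product $t\mapsto\alpha(t)\ast\beta(t)$ is continuous. For $A,B\subseteq M$, $A\ast B=\{a\ast b\mid a\in A,b\in B\}$. A sequence of loops $\alpha_n\in\Omega(M,e)$ is a null-sequence if every neighborhood of $e$ contains $\mathrm{Im}(\alpha_n)$ for all but finitely many $n$; its infinite concatenation $\prod_{n=1}^\infty\alpha_n$ is the loop equal to (a linear reparametrization of) $\alpha_n$ on $[\frac{n-1}{n},\frac{n}{n+1}]$ and sending $1$ to $e$. *)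

From Stdlib Require Import Reals Lra Lia ZArith.
Open Scope R_scope.

Record Topology (X : Type) := {
  is_open : (X -> Prop) -> Prop;
  open_full : is_open (fun _ => True);
  open_inter : forall U V, is_open U -> is_open V -> is_open (fun x => U x /\ V x);
  open_union : forall F : (X -> Prop) -> Prop,
      (forall U, F U -> is_open U) -> is_open (fun x => exists U, F U /\ U x)
}.
Arguments is_open {X} _ _.

Definition unit_I (t : R) : Prop := 0 <= t <= 1.

Definition nbhd {X} (T : Topology X) (x : X) (N : X -> Prop) : Prop :=
  exists U, is_open T U /\ U x /\ (forall y, U y -> N y).

(* A path is a function R -> X of which only the restriction to [0,1] matters;
   it is continuous if this restriction is continuous ([0,1] with the
   Euclidean subspace topology). *)
Definition path_continuous {X} (T : Topology X) (a : R -> X) : Prop :=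
  forall U, is_open T U -> forall t, unit_I t -> U (a t) ->
    exists d, 0 < d /\ forall s, unit_I s -> Rabs (s - t) < d -> U (a s).

Definition square_continuous {X} (T : Topology X) (H : R -> R -> X) : Prop :=
  forall U, is_open T U -> forall s t, unit_I s -> unit_I t -> U (H s t) ->
    exists d, 0 < d /\ forall s' t', unit_I s' -> unit_I t' ->
      Rabs (s' - s) < d -> Rabs (t' - t) < d -> U (H s' t').

Definition path_connected {X} (T : Topology X) : Prop :=
  forall x y, exists a, path_continuous T a /\ a 0 = x /\ a 1 = y.

Definition pre_Delta_monoid {M} (T : Topology M) (op : M -> M -> M) (e : M) : Prop :=
  (forall x y z, op x (op y z) = op (op x y) z) /\
  (forall x, op e x = x) /\ (forall x, op x e = x) /\
  (forall a b, path_continuous T a -> path_continuous T b ->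
     path_continuous T (fun t => op (a t) (b t))).

Definition is_loop {M} (T : Topology M) (e : M) (a : R -> M) : Prop :=
  path_continuous T a /\ a 0 = e /\ a 1 = e.

Definition path_image {X} (a : R -> X) : X -> Prop :=
  fun x => exists t, unit_I t /\ a t = x.

Definition set_prod {M} (op : M -> M -> M) (A B : M -> Prop) : M -> Prop :=
  fun x => exists a b, A a /\ B b /\ x = op a b.

(* null-sequence of loops (indexed from 0) *)
Definition null_sequence {M} (T : Topology M) (e : M) (a : nat -> R -> M) : Prop :=
  (forall n, is_loop T e (a n)) /\
  (forall N, nbhd T e N -> exists n0, forall n, (n0 <= n)%nat ->
     forall t, unit_I t -> N (a n t)).

(* For 0 <= t < 1, the unique k with k/(k+1) <= t < (k+1)/(k+2),
   namely floor(1/(1-t)) - 1. *)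
Definition concat_index (t : R) : nat :=
  (Z.to_nat (Int_part (/ (1 - t))) - 1)%nat.

(* Infinite concatenation: the 0-indexed a k (the paper's alpha_{k+1}) is
   linearly reparametrized onto [k/(k+1), (k+1)/(k+2)]; 1 is sent to e. *)
Definition inf_concat {M} (e : M) (a : nat -> R -> M) (t : R) : M :=
  if Rlt_dec t 1 then
    let k := concat_index t in
    a k ((t - INR k / INR (k + 1)) * (INR (k + 1) * INR (k + 2)))
  else e.

Definition bijective_nat (phi : nat -> nat) : Prop :=
  (forall m n, phi m = phi n -> m = n) /\ (forall m, exists n, phi n = m).

From Stdlib Require Import Reals Lra Lia ZArith Classical ClassicalEpsilon.
Open Scope R_scope.

(* The rearrangement is carried out by a bubble sort: stage [m] moves the loop
   [a (phi k)] one slot towards its place by exchanging two adjacent loops, and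
   the stages are glued along the slots [[m/(m+1), (m+1)/(m+2)]] of the
   homotopy parameter.  An exchange takes both loops out of the concatenation
   and multiplies them back in on the right inside two moving windows; as [e]
   is a two-sided identity this stays in [Im * Im].  Continuity of pointwise
   products is only assumed along paths, but it extends to maps on the square
   by a sequential argument, and it forces [a n u * a n' v] into any
   neighbourhood of [e] for [n, n'] large; this gives continuity at the end of
   the homotopy, where the stages have sorted ever longer initial segments. *)

(** * Slots of an infinite concatenation *)

Definition slot_start (k : nat) : R := INR k / INR (k + 1).
Definition slot_rate (k : nat) : R := INR (k + 1) * INR (k + 2).
Definition concat_local (t : R) : R :=
  (t - slot_start (concat_index t)) * slot_rate (concat_index t).

Lemma inf_concat_eq {M} (e : M) b t :
  inf_concat e b t = if Rlt_dec t 1 then b (concat_index t) (concat_local t) else e.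
Proof. reflexivity. Qed.

Lemma INR_S_pos k : 0 < INR k + 1.
Proof. pose proof (pos_INR k); lra. Qed.

Lemma slot_start_eq k : slot_start k = 1 - / (INR k + 1).
Proof.
  unfold slot_start. rewrite plus_INR. simpl (INR 1).
  pose proof (INR_S_pos k). field. lra.
Qed.

Lemma slot_rate_eq k : slot_rate k = (INR k + 1) * (INR k + 2).
Proof. unfold slot_rate. rewrite !plus_INR. simpl (INR 1). simpl (INR 2). ring. Qed.

Lemma slot_rate_ge1 k : 1 <= slot_rate k.
Proof. rewrite slot_rate_eq. pose proof (pos_INR k). nra. Qed.

Lemma slot_rate_pos k : 0 < slot_rate k.
Proof. pose proof (slot_rate_ge1 k). lra. Qed.

Lemma slot_rate_le_S k : slot_rate k <= slot_rate (S k).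
Proof. rewrite !slot_rate_eq, S_INR. pose proof (pos_INR k). nra. Qed.

Lemma slot_start_S k : slot_start (S k) = slot_start k + / slot_rate k.
Proof. rewrite !slot_start_eq, slot_rate_eq, S_INR. pose proof (pos_INR k). field. lra. Qed.

Lemma slot_width_mul_rate k : (slot_start (S k) - slot_start k) * slot_rate k = 1.
Proof. rewrite slot_start_S. pose proof (slot_rate_pos k). field. lra. Qed.

Lemma slot_start_0 : slot_start 0 = 0.
Proof. unfold slot_start. simpl. field. Qed.

Lemma slot_start_lt1 k : slot_start k < 1.
Proof.
  rewrite slot_start_eq. pose proof (Rinv_0_lt_compat _ (INR_S_pos k)). lra.
Qed.

Lemma slot_start_le m n : (m <= n)%nat -> slot_start m <= slot_start n.
Proof.
  intros H. rewrite !slot_start_eq. apply le_INR in H.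
  assert (/ (INR n + 1) <= / (INR m + 1)) by (apply Rinv_le_contravar; [apply INR_S_pos | lra]).
  lra.
Qed.

Lemma slot_start_ge0 k : 0 <= slot_start k.
Proof. rewrite <- slot_start_0. apply slot_start_le. lia. Qed.

Lemma slot_start_lt m n : (m < n)%nat -> slot_start m < slot_start n.
Proof.
  intros H. rewrite !slot_start_eq. apply lt_INR in H.
  assert (/ (INR n + 1) < / (INR m + 1)).
  { apply Rinv_lt_contravar; [pose proof (INR_S_pos m); pose proof (INR_S_pos n); nra | lra]. }
  lra.
Qed.

Lemma concat_index_spec t : 0 <= t < 1 ->
  slot_start (concat_index t) <= t < slot_start (S (concat_index t)).
Proof.
  intros [H0 H1]. unfold concat_index.
  set (r := / (1 - t)).
  assert (Hr : 1 <= r) by (unfold r; rewrite <- Rinv_1; apply Rinv_le_contravar; lra).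
  assert (Ht : t = 1 - / r) by (unfold r; rewrite Rinv_inv; ring).
  destruct (base_Int_part r) as [B1 B2].
  set (z := Int_part r) in *.
  assert (Hz : (1 <= z)%Z) by (assert (0 < IZR z) by lra; apply lt_IZR in H; lia).
  assert (Hk : INR (Z.to_nat z - 1) + 1 = IZR z).
  { rewrite minus_INR, INR_IZR_INZ, Z2Nat.id by lia. simpl. ring. }
  rewrite !slot_start_eq, S_INR, Hk, Ht.
  split.
  - assert (/ r <= / IZR z) by (apply Rinv_le_contravar; lra). lra.
  - assert (/ (IZR z + 1) < / r) by (apply Rinv_lt_contravar; nra). lra.
Qed.

Lemma concat_index_unique k t :
  slot_start k <= t < slot_start (S k) -> concat_index t = k.
Proof.
  intros [H1 H2].
  assert (0 <= t < 1) by (pose proof (slot_start_ge0 k); pose proof (slot_start_lt1 (S k)); lra).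
  destruct (concat_index_spec t H) as [A B].
  destruct (Nat.lt_trichotomy (concat_index t) k) as [C|[C|C]]; auto.
  - pose proof (slot_start_le _ _ C). lra.
  - pose proof (slot_start_le _ _ C). lra.
Qed.

Lemma concat_in_slot k t : slot_start k <= t < slot_start (S k) ->
  concat_index t = k /\ concat_local t = (t - slot_start k) * slot_rate k /\
  0 <= concat_local t < 1.
Proof.
  intros H. pose proof (concat_index_unique k t H) as E.
  unfold concat_local. rewrite E. do 2 (split; auto).
  pose proof (slot_width_mul_rate k). pose proof (slot_rate_pos k). split; nra.
Qed.

Lemma concat_at_0 : concat_index 0 = 0%nat /\ concat_local 0 = 0.
Proof.
  pose proof (slot_start_lt 0 1 ltac:(lia)). rewrite slot_start_0 in H.
  destruct (concat_in_slot 0 0) as [E1 [E2 _]]; [rewrite slot_start_0; lra|].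
  rewrite E2, slot_start_0. split; [auto | ring].
Qed.

Lemma concat_local_range t : 0 <= t < 1 -> 0 <= concat_local t < 1.
Proof. intros H. apply (concat_in_slot (concat_index t)), concat_index_spec, H. Qed.

Lemma concat_local_unit t : 0 <= t < 1 -> unit_I (concat_local t).
Proof. intros H. pose proof (concat_local_range t H). unfold unit_I. lra. Qed.

Lemma concat_index_ge K t : slot_start K <= t -> t < 1 -> (K <= concat_index t)%nat.
Proof.
  intros H1 H2. assert (0 <= t < 1) by (pose proof (slot_start_ge0 K); lra).
  destruct (concat_index_spec t H). destruct (le_lt_dec K (concat_index t)); auto.
  pose proof (slot_start_le _ _ l). lra.
Qed.

Lemma concat_index_lt K t : 0 <= t -> t < slot_start K -> (concat_index t < K)%nat.
Proof.
  intros H1 H2. assert (0 <= t < 1) by (pose proof (slot_start_lt1 K); lra).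
  destruct (concat_index_spec t H). destruct (le_lt_dec K (concat_index t)); auto.
  pose proof (slot_start_le _ _ l). lra.
Qed.

Lemma slot_start_near_1 d : 0 < d -> exists K, 1 - d < slot_start K.
Proof.
  intros Hd. destruct (archimed (/ d)) as [A _].
  set (K := Z.to_nat (up (/ d))). exists K. rewrite slot_start_eq.
  assert (0 < / d) by (apply Rinv_0_lt_compat; lra).
  assert (HI : / d < INR K + 1).
  { unfold K. rewrite INR_IZR_INZ, Z2Nat.id; [lra | apply le_IZR; lra]. }
  assert (/ (INR K + 1) < d) by (rewrite <- (Rinv_inv d); apply Rinv_lt_contravar; nra).
  lra.
Qed.

(** * Continuity on the unit square *)

Definition lipschitz2 (f : R -> R -> R) (L : R) : Prop :=
  forall s t s' t', unit_I s -> unit_I t -> unit_I s' -> unit_I t' ->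
    Rabs (f s' t' - f s t) <= L * (Rabs (s' - s) + Rabs (t' - t)).

Definition maps_unit_square (f : R -> R -> R) : Prop :=
  forall s t, unit_I s -> unit_I t -> unit_I (f s t).

Lemma Rabs_mul_lt_div u K d : 0 < K -> Rabs u < d / K -> Rabs (u * K) < d.
Proof.
  intros HK Hu. rewrite Rabs_mult, (Rabs_right K) by lra.
  apply (Rmult_lt_compat_r K) in Hu; [|lra].
  replace (d / K * K) with d in Hu by (field; lra). exact Hu.
Qed.

Lemma exists_pos_le2 a b : 0 < a -> 0 < b -> exists x, 0 < x /\ x <= a /\ x <= b.
Proof. intros. exists (Rmin a b). split; [apply Rmin_pos; auto | split; [apply Rmin_l | apply Rmin_r]]. Qed.

Lemma exists_pos_le3 a b c : 0 < a -> 0 < b -> 0 < c ->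
  exists x, 0 < x /\ x <= a /\ x <= b /\ x <= c.
Proof.
  intros. destruct (exists_pos_le2 a b) as [x [? [? ?]]]; auto.
  destruct (exists_pos_le2 x c) as [y [? [? ?]]]; auto. exists y; repeat split; lra.
Qed.

Lemma lipschitz2_close f L d s t s' t' : lipschitz2 f L -> 0 < L ->
  unit_I s -> unit_I t -> unit_I s' -> unit_I t' ->
  Rabs (s' - s) < d / (2 * L) -> Rabs (t' - t) < d / (2 * L) -> Rabs (f s' t' - f s t) < d.
Proof.
  intros Hf HL Hs Ht Hs' Ht' A B. eapply Rle_lt_trans; [apply Hf; auto|].
  assert (L * (Rabs (s' - s) + Rabs (t' - t)) < L * (d / (2 * L) + d / (2 * L)))
    by (apply Rmult_lt_compat_l; lra).
  replace (L * (d / (2 * L) + d / (2 * L))) with d in H by (field; lra). exact H.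
Qed.

Lemma square_continuous_comp_lip {M} (T : Topology M) X f g L :
  square_continuous T X -> 0 < L -> maps_unit_square f -> maps_unit_square g ->
  lipschitz2 f L -> lipschitz2 g L ->
  square_continuous T (fun s t => X (f s t) (g s t)).
Proof.
  intros HX HL Mf Mg Lf Lg U HU s t Hs Ht HUx.
  destruct (HX U HU (f s t) (g s t) (Mf s t Hs Ht) (Mg s t Hs Ht) HUx) as [d [Hd Hd']].
  exists (d / (2 * L)). split; [apply Rdiv_lt_0_compat; lra|].
  intros s' t' Hs' Ht' A B.
  apply Hd'; auto; eapply lipschitz2_close; eauto.
Qed.

Lemma path_comp_lip2 {M} (T : Topology M) p f L :
  path_continuous T p -> 0 < L -> maps_unit_square f -> lipschitz2 f L ->
  square_continuous T (fun s t => p (f s t)).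
Proof.
  intros Hp HL Mf Lf U HU s t Hs Ht HUx.
  destruct (Hp U HU (f s t) (Mf s t Hs Ht) HUx) as [d [Hd Hd']].
  exists (d / (2 * L)). split; [apply Rdiv_lt_0_compat; lra|].
  intros s' t' Hs' Ht' A B.
  apply Hd'; auto; eapply lipschitz2_close; eauto.
Qed.

Lemma square_continuous_snd {M} (T : Topology M) p :
  path_continuous T p -> square_continuous T (fun s t => p t).
Proof.
  intros Hp. apply (path_comp_lip2 T p (fun s t => t) 1); auto; try lra.
  - intros s t _ Ht; auto.
  - intros s t s' t' _ _ _ _. pose proof (Rabs_pos (s' - s)). lra.
Qed.

Lemma square_continuous_fst {M} (T : Topology M) p :
  path_continuous T p -> square_continuous T (fun s t => p s).
Proof.
  intros Hp. apply (path_comp_lip2 T p (fun s t => s) 1); auto; try lra.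
  - intros s t Hs _; auto.
  - intros s t s' t' _ _ _ _. pose proof (Rabs_pos (t' - t)). lra.
Qed.

Lemma path_continuous_comp_lip {M} (T : Topology M) p g L :
  path_continuous T p -> 0 < L -> (forall x, unit_I x -> unit_I (g x)) ->
  (forall x y, unit_I x -> unit_I y -> Rabs (g y - g x) <= L * Rabs (y - x)) ->
  path_continuous T (fun x => p (g x)).
Proof.
  intros Hp HL Hg Lg U HU t Ht HUt. destruct (Hp U HU (g t) (Hg t Ht) HUt) as [d [Hd Hd']].
  exists (d / L). split; [apply Rdiv_lt_0_compat; lra|]. intros s Hs Hst. apply Hd'; auto.
  eapply Rle_lt_trans; [apply Lg; auto|]. apply (Rmult_lt_compat_l L) in Hst; auto.
  replace (L * (d / L)) with d in Hst by (field; lra). exact Hst.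
Qed.

Definition square_continuous_at {M} (T : Topology M) (H : R -> R -> M) (s t : R) : Prop :=
  forall U, is_open T U -> U (H s t) ->
    exists d, 0 < d /\ forall s' t', unit_I s' -> unit_I t' ->
      Rabs (s' - s) < d -> Rabs (t' - t) < d -> U (H s' t').

Lemma square_continuous_of_at {M} (T : Topology M) H :
  (forall s t, unit_I s -> unit_I t -> square_continuous_at T H s t) -> square_continuous T H.
Proof. intros HH U HU s t Hs Ht. apply HH; auto. Qed.

Section Glue.
Context {M : Type} (T : Topology M) (piece : nat -> R -> R -> M).
Hypothesis piece_cont : forall m, square_continuous T (piece m).
Hypothesis piece_match : forall m t, unit_I t -> piece m 1 t = piece (S m) 0 t.

Lemma glue_slot_local U m s t : is_open T U ->
  slot_start m <= s <= slot_start (S m) -> unit_I t ->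
  U (piece m ((s - slot_start m) * slot_rate m) t) ->
  exists d, 0 < d /\ forall s' t', unit_I t' -> slot_start m <= s' < slot_start (S m) ->
    Rabs (s' - s) < d -> Rabs (t' - t) < d -> U (piece (concat_index s') (concat_local s') t').
Proof.
  intros HU Hs Ht HUs. pose proof (slot_rate_pos m). pose proof (slot_width_mul_rate m).
  assert (Hx : unit_I ((s - slot_start m) * slot_rate m)) by (unfold unit_I; split; nra).
  destruct (piece_cont m U HU _ t Hx Ht HUs) as [d0 [Hd0 Hd0']].
  destruct (exists_pos_le2 (d0 / slot_rate m) d0) as [d [D0 [D1 D2]]];
    [apply Rdiv_lt_0_compat; lra | lra |].
  exists d. split; auto. intros s' t' Ht' Hs' A B.
  destruct (concat_in_slot m s' Hs') as [E1 [E2 E3]].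
  rewrite E1, E2. apply Hd0'; auto; [unfold unit_I; rewrite <- E2; lra | | lra].
  replace ((s' - slot_start m) * slot_rate m - (s - slot_start m) * slot_rate m)
    with ((s' - s) * slot_rate m) by ring.
  apply Rabs_mul_lt_div; lra.
Qed.

(* At the left end [slot_start m] of a slot with [m > 0], the glued map is
   controlled from the left by [piece (m-1)] at [1], which equals [piece m] at [0]. *)
Lemma glue_slots_continuous U : is_open T U ->
  forall s t, 0 <= s < 1 -> unit_I t -> U (piece (concat_index s) (concat_local s) t) ->
  exists d, 0 < d /\ forall s' t', unit_I s' -> unit_I t' ->
    Rabs (s' - s) < d -> Rabs (t' - t) < d ->
    s' < 1 /\ U (piece (concat_index s') (concat_local s') t').
Proof.
  intros HU s t Hs Ht HUs.
  set (m := concat_index s) in *.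
  destruct (concat_index_spec s Hs) as [L1 L2]. fold m in L1, L2.
  destruct (glue_slot_local U m s t HU ltac:(lra) Ht HUs) as [d1 [Hd1 Hd1']].
  assert (Hleft : exists d2, 0 < d2 /\ forall s' t', unit_I s' -> unit_I t' ->
      s' < slot_start m -> Rabs (s' - s) < d2 -> Rabs (t' - t) < d2 ->
      U (piece (concat_index s') (concat_local s') t')).
  { destruct (Rlt_or_le (slot_start m) s) as [Hint|Hbd].
    - exists (s - slot_start m). split; [lra|].
      intros s' t' _ _ C A _. apply Rabs_def2 in A. lra.
    - destruct m as [|m'] eqn:Em.
      + exists 1. split; [lra|]. intros s' t' Hs' _ C. rewrite slot_start_0 in C.
        destruct Hs'. lra.
      + assert (Hs_eq : s = slot_start (S m')) by lra.
        pose proof (slot_width_mul_rate m') as W.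
        unfold concat_local in HUs. fold m in HUs. rewrite Em, Hs_eq, Rminus_diag, Rmult_0_l in HUs.
        rewrite <- piece_match, <- W, <- Hs_eq in HUs by auto.
        pose proof (slot_start_lt m' (S m') ltac:(lia)).
        destruct (glue_slot_local U m' s t HU ltac:(lra) Ht HUs) as [d2 [Hd2 Hd2']].
        exists (Rmin d2 (s - slot_start m')). split; [apply Rmin_pos; lra|].
        intros s' t' Hs' Ht' C A B. pose proof (Rmin_l d2 (s - slot_start m')).
        pose proof (Rmin_r d2 (s - slot_start m')). apply Hd2'; auto; [|lra|lra].
        apply Rabs_def2 in A. lra. }
  destruct Hleft as [d2 [Hd2 Hd2']].
  pose proof (slot_start_lt1 (S m)).
  destruct (exists_pos_le3 d1 d2 (slot_start (S m) - s)) as [d [D0 [D1 [D2 D3]]]];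
    try lra.
  exists d. split; auto. intros s' t' Hs' Ht' A B. pose proof (Rabs_def2 _ _ A).
  split; [lra|].
  destruct (Rlt_or_le s' (slot_start m)); [apply Hd2'; auto; lra | apply Hd1'; auto; lra].
Qed.

End Glue.

(** * Infinite concatenations *)

Lemma inf_concat_at_1 {M} (e : M) b : inf_concat e b 1 = e.
Proof. rewrite inf_concat_eq. destruct (Rlt_dec 1 1); [lra | auto]. Qed.

Lemma inf_concat_at_0 {M} (e : M) b : (forall n, b n 0 = e) -> inf_concat e b 0 = e.
Proof.
  intros H. rewrite inf_concat_eq. destruct (Rlt_dec 0 1); [|lra].
  destruct concat_at_0 as [-> ->]. auto.
Qed.

Lemma const_loop {M} (T : Topology M) (e : M) : is_loop T e (fun _ => e).
Proof. split; auto. intros U HU t Ht HUe. exists 1. split; [lra | auto]. Qed.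

Lemma inf_concat_continuous {M} (T : Topology M) (e : M) b :
  null_sequence T e b -> path_continuous T (inf_concat e b).
Proof.
  intros [Hl Hn] U HU t Ht HUt. rewrite inf_concat_eq in HUt.
  destruct (Rlt_dec t 1) as [H1|H1].
  - destruct (glue_slots_continuous T (fun m s _ => b m s)
       (fun m => square_continuous_fst T (b m) (proj1 (Hl m)))
       (fun m t _ => eq_trans (proj2 (proj2 (Hl m))) (eq_sym (proj1 (proj2 (Hl (S m))))))
       U HU t 0 ltac:(unfold unit_I in *; lra) ltac:(unfold unit_I; lra) HUt) as [d [Hd Hd']].
    exists d. split; auto. intros s Hs Hst.
    destruct (Hd' s 0 Hs ltac:(unfold unit_I; lra) Hst
      ltac:(rewrite Rminus_0_r, Rabs_R0; lra)) as [A B].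
    rewrite inf_concat_eq. destruct (Rlt_dec s 1); [auto | lra].
  - destruct (Hn U (ex_intro _ U (conj HU (conj HUt (fun y Hy => Hy))))) as [n0 Hn0].
    exists (1 - slot_start n0). split; [pose proof (slot_start_lt1 n0); lra|].
    intros s Hs Hst. assert (t = 1) by (unfold unit_I in *; lra). subst t.
    apply Rabs_def2 in Hst.
    rewrite inf_concat_eq. destruct (Rlt_dec s 1) as [Hs1|Hs1]; auto.
    apply Hn0; [apply concat_index_ge; lra | apply concat_local_unit; unfold unit_I in *; lra].
Qed.

Lemma bijection_preimage_bounded (psi : nat -> nat) :
  (forall n m, psi n = psi m -> n = m) -> (forall i, exists n, psi n = i) ->
  forall K, exists B, forall n, (psi n < K)%nat -> (n < B)%nat.
Proof.
  intros Hinj Hsur. induction K as [|K [B IH]].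
  - exists 0%nat. intros; lia.
  - destruct (Hsur K) as [nK HK]. exists (Nat.max B (S nK)). intros n Hn.
    destruct (Nat.eq_dec (psi n) K) as [E|E].
    + rewrite <- HK in E. apply Hinj in E. lia.
    + specialize (IH n ltac:(lia)). lia.
Qed.

Lemma null_sequence_reindex {M} (T : Topology M) (e : M) a (psi : nat -> nat) :
  null_sequence T e a -> (forall n m, psi n = psi m -> n = m) -> (forall i, exists n, psi n = i) ->
  null_sequence T e (fun n => a (psi n)).
Proof.
  intros [Hl Hn] Hinj Hsur. split; [intros; apply Hl|].
  intros N HN. destruct (Hn N HN) as [n0 Hn0].
  destruct (bijection_preimage_bounded psi Hinj Hsur n0) as [B HB].
  exists B. intros n Hn' t Ht. apply Hn0; auto.
  destruct (le_lt_dec n0 (psi n)) as [|C]; auto. apply HB in C. lia.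
Qed.

Lemma null_sequence_or_const {M} (T : Topology M) (e : M) b c :
  null_sequence T e b -> (forall n, is_loop T e (c n)) ->
  (forall n t, unit_I t -> c n t = e \/ c n t = b n t) -> null_sequence T e c.
Proof.
  intros [Hl Hn] Hc Hcb. split; auto. intros N HN. destruct (Hn N HN) as [n0 Hn0].
  exists n0. intros n Hn' t Ht. destruct (Hcb n t Ht) as [E|E]; rewrite E.
  - destruct HN as [U [_ [HU HUN]]]. auto.
  - apply Hn0; auto.
Qed.

Lemma inf_concat_image_e {M} (e : M) a : path_image (inf_concat e a) e.
Proof. exists 1. split; [unfold unit_I; lra | apply inf_concat_at_1]. Qed.

Lemma inf_concat_image {M} (T : Topology M) (e : M) a n u :
  null_sequence T e a -> unit_I u -> path_image (inf_concat e a) (a n u).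
Proof.
  intros Ha Hu. destruct (Req_dec u 1) as [E|E].
  - rewrite E, (proj2 (proj2 (proj1 Ha n))). apply inf_concat_image_e.
  - unfold unit_I in Hu. pose proof (slot_rate_pos n). pose proof (slot_width_mul_rate n).
    pose proof (slot_start_ge0 n). pose proof (slot_start_lt1 (S n)).
    set (t := slot_start n + u / slot_rate n).
    assert (Ht : slot_start n <= t < slot_start (S n)).
    { unfold t. split.
      - assert (0 <= u / slot_rate n) by (apply Rmult_le_pos; [lra | left; apply Rinv_0_lt_compat; lra]). lra.
      - apply (Rmult_lt_reg_r (slot_rate n)); [lra|].
        replace ((slot_start n + u / slot_rate n) * slot_rate n)
          with (slot_start n * slot_rate n + u) by (field; lra). nra. }
    destruct (concat_in_slot n t Ht) as [E1 [E2 _]].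
    exists t. split; [unfold unit_I; lra|]. rewrite inf_concat_eq.
    destruct (Rlt_dec t 1); [|lra].
    rewrite E1, E2. f_equal. unfold t. field. lra.
Qed.

(** * Pointwise products on the square *)

(* The piecewise linear path visiting [x n] at time [slot_start n] and ending at [s]. *)
Definition through_points (x : nat -> R) (s tau : R) : R :=
  if Rlt_dec tau 1 then
    (1 - concat_local tau) * x (concat_index tau) + concat_local tau * x (S (concat_index tau))
  else s.

Lemma through_points_slot_start x s n : through_points x s (slot_start n) = x n.
Proof.
  unfold through_points. destruct (Rlt_dec (slot_start n) 1) as [H|H];
    [|pose proof (slot_start_lt1 n); lra].
  pose proof (slot_width_mul_rate n). pose proof (slot_start_lt n (S n) ltac:(lia)).
  destruct (concat_in_slot n (slot_start n) ltac:(lra)) as [E1 [E2 _]].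
  rewrite E1, E2. ring.
Qed.

Lemma through_points_at_1 x s : through_points x s 1 = s.
Proof. unfold through_points. destruct (Rlt_dec 1 1); [lra | auto]. Qed.

Lemma segment_maps_unit x0 x1 : unit_I x0 -> unit_I x1 ->
  maps_unit_square (fun a _ => (1 - a) * x0 + a * x1).
Proof. intros H0 H1 a _ Ha _. unfold unit_I in *. split; nra. Qed.

Lemma segment_lipschitz x0 x1 : unit_I x0 -> unit_I x1 ->
  lipschitz2 (fun a _ => (1 - a) * x0 + a * x1) 1.
Proof.
  intros H0 H1 a b a' b' _ _ _ _.
  replace ((1 - a') * x0 + a' * x1 - ((1 - a) * x0 + a * x1)) with ((a' - a) * (x1 - x0)) by ring.
  rewrite Rabs_mult. unfold unit_I in *.
  assert (Rabs (x1 - x0) <= 1) by (apply Rabs_le; lra).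
  pose proof (Rabs_pos (a' - a)); pose proof (Rabs_pos (b' - b)). nra.
Qed.

Lemma through_points_unit x s tau : unit_I s -> (forall n, unit_I (x n)) -> unit_I tau ->
  unit_I (through_points x s tau).
Proof.
  intros Hs Hx Htau. unfold through_points. destruct (Rlt_dec tau 1); auto.
  apply (segment_maps_unit _ _ (Hx _) (Hx _) _ 0);
    [apply concat_local_unit | ]; unfold unit_I in *; lra.
Qed.

Lemma through_points_near x s K tau : (forall n, Rabs (x n - s) < 1 - slot_start n) ->
  slot_start K <= tau -> unit_I tau -> Rabs (through_points x s tau - s) <= 1 - slot_start K.
Proof.
  intros Cx HK Htau. unfold through_points. destruct (Rlt_dec tau 1) as [H1|H1];
    [|rewrite Rminus_diag, Rabs_R0; pose proof (slot_start_lt1 K); lra].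
  set (k := concat_index tau).
  assert (Hk : (K <= k)%nat) by (apply concat_index_ge; lra).
  pose proof (slot_start_le K k Hk). pose proof (slot_start_le K (S k) ltac:(lia)).
  pose proof (Rabs_def2 _ _ (Cx k)). pose proof (Rabs_def2 _ _ (Cx (S k))).
  pose proof (concat_local_range tau ltac:(unfold unit_I in *; lra)).
  apply Rabs_le. fold k. split; nra.
Qed.

Lemma path_through_continuous {M} (T : Topology M) X x y s t :
  square_continuous T X -> unit_I s -> unit_I t ->
  (forall n, unit_I (x n)) -> (forall n, unit_I (y n)) ->
  (forall n, Rabs (x n - s) < 1 - slot_start n) -> (forall n, Rabs (y n - t) < 1 - slot_start n) ->
  path_continuous T (fun tau => X (through_points x s tau) (through_points y t tau)).
Proof.
  intros HX Hs Ht Hx Hy Cx Cy.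
  set (Sg := fun n a (_ : R) => X ((1 - a) * x n + a * x (S n)) ((1 - a) * y n + a * y (S n))).
  assert (HS : forall n, square_continuous T (Sg n)).
  { intro n. apply (square_continuous_comp_lip T X _ _ 1); try lra; auto;
      (apply segment_maps_unit || apply segment_lipschitz); auto. }
  assert (HM : forall n t0, unit_I t0 -> Sg n 1 t0 = Sg (S n) 0 t0)
    by (intros; unfold Sg; f_equal; ring).
  intros U HU tau Htau HUt.
  destruct (Rlt_dec tau 1) as [H1|H1].
  - assert (Eq : forall tau', tau' < 1 ->
      X (through_points x s tau') (through_points y t tau')
      = Sg (concat_index tau') (concat_local tau') 0).
    { intros tau' H. unfold through_points, Sg. destruct (Rlt_dec tau' 1); [reflexivity | lra]. }
    rewrite Eq in HUt by auto.
    destruct (glue_slots_continuous T Sg HS HM U HU tau 0 ltac:(unfold unit_I in *; lra)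
      ltac:(unfold unit_I; lra) HUt) as [d [Hd Hd']].
    exists d. split; auto. intros s' Hs' Hst.
    destruct (Hd' s' 0 Hs' ltac:(unfold unit_I; lra) Hst
      ltac:(rewrite Rminus_0_r, Rabs_R0; lra)) as [A B].
    rewrite Eq; auto.
  - assert (tau = 1) by (unfold unit_I in *; lra). subst tau.
    rewrite !through_points_at_1 in HUt.
    destruct (HX U HU s t Hs Ht HUt) as [d0 [Hd0 Hd0']].
    destruct (slot_start_near_1 d0 Hd0) as [K HK].
    exists (1 - slot_start K). split; [pose proof (slot_start_lt1 K); lra|].
    intros s' Hs' Hst. apply Rabs_def2 in Hst.
    apply Hd0'; try apply through_points_unit; auto;
      (eapply Rle_lt_trans; [apply (through_points_near _ _ K); auto; lra | lra]).
Qed.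

(* A sequential criterion: a discontinuity at [(s, t)] would give points
   [(x n, y n)] converging to it with values outside an open set, and the path
   through them would be discontinuous at its end. *)
Lemma square_continuous_of_paths_through {M} (T : Topology M) X :
  (forall x y s t, unit_I s -> unit_I t ->
     (forall n, unit_I (x n)) -> (forall n, unit_I (y n)) ->
     (forall n, Rabs (x n - s) < 1 - slot_start n) ->
     (forall n, Rabs (y n - t) < 1 - slot_start n) ->
     path_continuous T (fun tau => X (through_points x s tau) (through_points y t tau))) ->
  square_continuous T X.
Proof.
  intros Hpath U HU s t Hs Ht HUst. apply NNPP. intros Hno.
  assert (Hseq : forall n, exists p : R * R, unit_I (fst p) /\ unit_I (snd p) /\
      Rabs (fst p - s) < 1 - slot_start n /\ Rabs (snd p - t) < 1 - slot_start n /\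
      ~ U (X (fst p) (snd p))).
  { intros n. apply NNPP. intros Hn. apply Hno. exists (1 - slot_start n).
    split; [pose proof (slot_start_lt1 n); lra|].
    intros s' t' Hs' Ht' A B. apply NNPP. intros C. apply Hn. exists (s', t'). simpl. auto. }
  destruct (choice _ Hseq) as [f Hf].
  pose proof (Hpath (fun n => fst (f n)) (fun n => snd (f n)) s t Hs Ht
    (fun n => proj1 (Hf n)) (fun n => proj1 (proj2 (Hf n)))
    (fun n => proj1 (proj2 (proj2 (Hf n)))) (fun n => proj1 (proj2 (proj2 (proj2 (Hf n))))))
    as P.
  destruct (P U HU 1 ltac:(unfold unit_I; lra) ltac:(cbv beta; rewrite !through_points_at_1; auto))
    as [d [Hd Hd']].
  destruct (slot_start_near_1 d Hd) as [K HK].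
  pose proof (slot_start_ge0 K). pose proof (slot_start_lt1 K).
  specialize (Hd' (slot_start K) ltac:(unfold unit_I; lra) ltac:(apply Rabs_def1; lra)).
  cbv beta in Hd'. rewrite !through_points_slot_start in Hd'. exact (proj2 (proj2 (proj2 (proj2 (Hf K)))) Hd').
Qed.

Lemma square_continuous_op {M} (T : Topology M) (op : M -> M -> M) X Y :
  (forall a b, path_continuous T a -> path_continuous T b ->
     path_continuous T (fun t => op (a t) (b t))) ->
  square_continuous T X -> square_continuous T Y ->
  square_continuous T (fun s t => op (X s t) (Y s t)).
Proof.
  intros Hop HX HY. apply square_continuous_of_paths_through.
  intros x y s t Hs Ht Hx Hy Cx Cy.
  apply Hop; apply path_through_continuous; auto.
Qed.

Definition tent (u x : R) : R := u * (1 - Rabs (2 * x - 1)).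

Lemma tent_unit u x : unit_I u -> unit_I x -> unit_I (tent u x).
Proof.
  unfold tent, unit_I. intros [] [].
  assert (0 <= Rabs (2 * x - 1) <= 1) by (split; [apply Rabs_pos | apply Rabs_le; lra]).
  split; nra.
Qed.

Lemma tent_lipschitz u x y : unit_I u -> Rabs (tent u y - tent u x) <= 2 * Rabs (y - x).
Proof.
  unfold tent, unit_I. intros [].
  replace (u * (1 - Rabs (2 * y - 1)) - u * (1 - Rabs (2 * x - 1)))
    with (u * (Rabs (2 * x - 1) - Rabs (2 * y - 1))) by ring.
  rewrite Rabs_mult, (Rabs_right u) by lra.
  assert (Rabs (Rabs (2 * x - 1) - Rabs (2 * y - 1)) <= 2 * Rabs (y - x)).
  { eapply Rle_trans; [apply Rabs_triang_inv2|].
    replace (2 * x - 1 - (2 * y - 1)) with (-2 * (y - x)) by ring.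
    rewrite Rabs_mult, (Rabs_left (-2)) by lra. lra. }
  pose proof (Rabs_pos (Rabs (2 * x - 1) - Rabs (2 * y - 1))). nra.
Qed.

Lemma tent_half u : tent u (1 / 2) = u.
Proof. unfold tent. replace (2 * (1 / 2) - 1) with 0 by field. rewrite Rabs_R0. ring. Qed.

Lemma tent_0 u : tent u 0 = 0.
Proof. unfold tent. replace (2 * 0 - 1) with (- 1) by ring. rewrite Rabs_left by lra. ring. Qed.

Lemma tent_1 u : tent u 1 = 0.
Proof. unfold tent. replace (2 * 1 - 1) with 1 by ring. rewrite Rabs_R1. ring. Qed.

Lemma null_sequence_tent {M} (T : Topology M) (e : M) a (n : nat -> nat) (u : nat -> R) :
  null_sequence T e a -> (forall m, (m <= n m)%nat) -> (forall m, unit_I (u m)) ->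
  null_sequence T e (fun m x => a (n m) (tent (u m) x)).
Proof.
  intros [Hl Hn] Hnm Hu. split.
  - intros m. destruct (Hl (n m)) as [C [E0 E1]]. split; [|split].
    + apply (path_continuous_comp_lip T _ _ 2); try lra; auto.
      * intros; apply tent_unit; auto.
      * intros; apply tent_lipschitz; auto.
    + rewrite tent_0; auto.
    + rewrite tent_1; auto.
  - intros N HN. destruct (Hn N HN) as [n0 Hn0]. exists n0. intros m Hm t Ht.
    apply Hn0; [specialize (Hnm m); lia | apply tent_unit; auto].
Qed.

Lemma slot_midpoint K :
  let tau := slot_start K + / (2 * slot_rate K) in
  tau < 1 /\ concat_index tau = K /\ concat_local tau = 1 / 2.
Proof.
  intros tau. pose proof (slot_rate_pos K). pose proof (slot_start_S K).
  pose proof (slot_start_lt1 (S K)).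
  assert (Ht : slot_start K <= tau < slot_start (S K)).
  { unfold tau. assert (0 < / (2 * slot_rate K)) by (apply Rinv_0_lt_compat; lra).
    assert (/ (2 * slot_rate K) < / slot_rate K) by (apply Rinv_lt_contravar; nra). lra. }
  destruct (concat_in_slot K tau Ht) as [I1 [I2 _]].
  split; [lra|]. split; auto. rewrite I2. unfold tau. field. lra.
Qed.

(* The values [a n u] are placed at the tops of tents in two null sequences;
   continuity at [1] of the pointwise product of their concatenations forces
   the products of values with large indices into [U]. *)
Lemma null_products_near_e {M} (T : Topology M) (op : M -> M -> M) (e : M) a :
  (forall a b, path_continuous T a -> path_continuous T b ->
     path_continuous T (fun t => op (a t) (b t))) ->
  op e e = e -> null_sequence T e a ->
  forall U, is_open T U -> U e -> exists N, forall n n' u v, (N <= n)%nat -> (N <= n')%nat ->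
    unit_I u -> unit_I v -> U (op (a n u) (a n' v)).
Proof.
  intros Hop Hee Ha U HU He. apply NNPP. intros Hno.
  assert (Hs : forall N, exists p : (nat * nat) * (R * R),
      (N <= fst (fst p))%nat /\ (N <= snd (fst p))%nat /\
      unit_I (fst (snd p)) /\ unit_I (snd (snd p)) /\
      ~ U (op (a (fst (fst p)) (fst (snd p))) (a (snd (fst p)) (snd (snd p))))).
  { intros N. apply NNPP. intros HN. apply Hno. exists N. intros n n' u v A B C D.
    apply NNPP. intros E. apply HN. exists ((n, n'), (u, v)). simpl. auto. }
  destruct (choice _ Hs) as [f Hf].
  set (c := fun m x => a (fst (fst (f m))) (tent (fst (snd (f m))) x)).
  set (c' := fun m x => a (snd (fst (f m))) (tent (snd (snd (f m))) x)).
  assert (Nc : null_sequence T e c) by (apply null_sequence_tent; auto; intros m; apply (Hf m)).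
  assert (Nc' : null_sequence T e c') by (apply null_sequence_tent; auto; intros m; apply (Hf m)).
  pose proof (Hop _ _ (inf_concat_continuous T e c Nc) (inf_concat_continuous T e c' Nc')) as P.
  destruct (P U HU 1 ltac:(unfold unit_I; lra) ltac:(cbv beta; rewrite !inf_concat_at_1, Hee; auto))
    as [d [Hd Hd']].
  destruct (slot_start_near_1 d Hd) as [K HK].
  destruct (slot_midpoint K) as [I0 [I1 I2]].
  set (tau := slot_start K + / (2 * slot_rate K)) in *.
  assert (0 < / (2 * slot_rate K)) by (pose proof (slot_rate_pos K); apply Rinv_0_lt_compat; lra).
  pose proof (slot_start_ge0 K).
  specialize (Hd' tau ltac:(unfold unit_I, tau in *; lra) ltac:(unfold tau in *; apply Rabs_def1; lra)).
  cbv beta in Hd'. rewrite !inf_concat_eq in Hd'. destruct (Rlt_dec tau 1) as [_|C]; [|lra].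
  rewrite I1, I2 in Hd'. unfold c, c' in Hd'. rewrite !tent_half in Hd'.
  exact (proj2 (proj2 (proj2 (proj2 (Hf K)))) Hd').
Qed.

(** * Exchanging two adjacent loops *)

Definition clamp01 (x : R) : R := Rmin 1 (Rmax 0 x).

Lemma clamp01_unit x : unit_I (clamp01 x).
Proof. unfold clamp01, unit_I, Rmin, Rmax. repeat destruct Rle_dec; lra. Qed.
Lemma clamp01_le0 x : x <= 0 -> clamp01 x = 0.
Proof. unfold clamp01, Rmin, Rmax. repeat destruct Rle_dec; lra. Qed.
Lemma clamp01_ge1 x : 1 <= x -> clamp01 x = 1.
Proof. unfold clamp01, Rmin, Rmax. repeat destruct Rle_dec; lra. Qed.
Lemma clamp01_id x : 0 <= x <= 1 -> clamp01 x = x.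
Proof. unfold clamp01, Rmin, Rmax. repeat destruct Rle_dec; lra. Qed.
Lemma clamp01_lipschitz x y : Rabs (clamp01 y - clamp01 x) <= Rabs (y - x).
Proof. unfold clamp01, Rmin, Rmax. repeat destruct Rle_dec; unfold Rabs; repeat destruct Rcase_abs; lra. Qed.

Definition moving_window (c0 c1 k0 k1 : R) (s t : R) : R :=
  clamp01 ((t - (c0 + s * c1)) * (k0 + s * k1)).

Lemma moving_window_lipschitz c0 c1 k0 k1 : exists L, 0 < L /\
  lipschitz2 (moving_window c0 c1 k0 k1) L.
Proof.
  set (A := Rabs k0 + Rabs k1). set (B := 1 + Rabs c0 + Rabs c1).
  pose proof (Rabs_pos k0); pose proof (Rabs_pos k1); pose proof (Rabs_pos c0); pose proof (Rabs_pos c1).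
  exists (1 + A + B * Rabs k1 + Rabs c1 * A). split; [unfold A, B; nra|].
  intros s t s' t' Hs Ht Hs' Ht'. eapply Rle_trans; [apply clamp01_lipschitz|].
  replace ((t' - (c0 + s' * c1)) * (k0 + s' * k1) - (t - (c0 + s * c1)) * (k0 + s * k1))
    with ((t' - t) * (k0 + s' * k1) + (t - (c0 + s * c1)) * ((s' - s) * k1)
          - ((s' - s) * c1) * (k0 + s' * k1)) by ring.
  unfold unit_I in *.
  assert (HA : Rabs (k0 + s' * k1) <= A).
  { unfold A. eapply Rle_trans; [apply Rabs_triang|]. rewrite Rabs_mult, (Rabs_right s') by lra. nra. }
  assert (HB : Rabs (t - (c0 + s * c1)) <= B).
  { unfold B. eapply Rle_trans; [apply Rabs_triang|]. rewrite Rabs_Ropp, (Rabs_right t) by lra.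
    eapply Rle_trans; [apply Rplus_le_compat_l, Rabs_triang|].
    rewrite Rabs_mult, (Rabs_right s) by lra. nra. }
  pose proof (Rabs_pos (s' - s)). pose proof (Rabs_pos (t' - t)).
  eapply Rle_trans; [apply Rabs_triang|]. rewrite Rabs_Ropp.
  eapply Rle_trans; [apply Rplus_le_compat_r, Rabs_triang|].
  rewrite !Rabs_mult.
  assert (Rabs (t' - t) * Rabs (k0 + s' * k1) <= Rabs (t' - t) * A) by nra.
  assert (Rabs (t - (c0 + s * c1)) * (Rabs (s' - s) * Rabs k1) <= B * (Rabs (s' - s) * Rabs k1))
    by (apply Rmult_le_compat_r; [apply Rmult_le_pos|]; lra).
  assert (Rabs (s' - s) * Rabs c1 * Rabs (k0 + s' * k1) <= Rabs (s' - s) * Rabs c1 * A)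
    by (apply Rmult_le_compat_l; [apply Rmult_le_pos|]; lra).
  assert (0 <= A) by (unfold A; lra). assert (0 <= B) by (unfold B; lra).
  assert (0 <= A * Rabs (s' - s)) by nra.
  assert (0 <= B * Rabs k1 * Rabs (t' - t)) by (apply Rmult_le_pos; nra).
  assert (0 <= Rabs c1 * A * Rabs (t' - t)) by (apply Rmult_le_pos; nra).
  nra.
Qed.

Lemma square_continuous_moving_window {M} (T : Topology M) p c0 c1 k0 k1 :
  path_continuous T p -> square_continuous T (fun s t => p (moving_window c0 c1 k0 k1 s t)).
Proof.
  intros Hp. destruct (moving_window_lipschitz c0 c1 k0 k1) as [L [HL Hlip]].
  apply (path_comp_lip2 T p _ L); auto. intros s t _ _. apply clamp01_unit.
Qed.

Definition slot_width (k : nat) : R := slot_start (S k) - slot_start k.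

Lemma slot_width_pos k : 0 < slot_width k.
Proof. unfold slot_width. pose proof (slot_start_lt k (S k) ltac:(lia)). lra. Qed.

(* The windows of the two loops exchanged at step [j]: as [s] runs from [0] to
   [1], the first moves from slot [j] to slot [S j] and the second back. *)
Definition swap_window_fst (j : nat) : R -> R -> R :=
  moving_window (slot_start j) (slot_width j) (slot_rate j) (slot_rate (S j) - slot_rate j).
Definition swap_window_snd (j : nat) : R -> R -> R :=
  moving_window (slot_start (S j)) (- slot_width j) (slot_rate (S j)) (slot_rate j - slot_rate (S j)).

Lemma Rmult_nonpos_nonneg x y : x <= 0 -> 0 <= y -> x * y <= 0.
Proof. intros; nra. Qed.

Lemma swap_windows_below j s t : unit_I s -> t <= slot_start j ->
  swap_window_fst j s t = 0 /\ swap_window_snd j s t = 0.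
Proof.
  intros Hs Ht. unfold unit_I in Hs. pose proof (slot_rate_pos j); pose proof (slot_rate_pos (S j)).
  pose proof (slot_width_pos j). pose proof (slot_rate_le_S j).
  unfold swap_window_fst, swap_window_snd, moving_window.
  split; apply clamp01_le0, Rmult_nonpos_nonneg; unfold slot_width in *; nra.
Qed.

Lemma swap_windows_above j s t : unit_I s -> slot_start (S (S j)) <= t ->
  swap_window_fst j s t = 1 /\ swap_window_snd j s t = 1.
Proof.
  intros Hs Ht. unfold unit_I in Hs.
  pose proof (slot_rate_pos j); pose proof (slot_rate_pos (S j)); pose proof (slot_rate_le_S j).
  pose proof (slot_width_mul_rate j) as W1; pose proof (slot_width_mul_rate (S j)) as W2.
  fold (slot_width j) in W1. fold (slot_width (S j)) in W2.
  pose proof (slot_width_pos j); pose proof (slot_width_pos (S j)).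
  assert (Hst : slot_start (S (S j)) = slot_start j + slot_width j + slot_width (S j))
    by (unfold slot_width; ring).
  assert (P1 : 1 <= slot_width j * slot_rate (S j)) by nra.
  assert (0 <= s * (1 - s) * (slot_width j * slot_rate (S j) - 1)) by (apply Rmult_le_pos; nra).
  unfold swap_window_fst, swap_window_snd, moving_window.
  split; apply clamp01_ge1.
  - set (k := slot_rate j + s * (slot_rate (S j) - slot_rate j)). assert (0 < k) by (unfold k; nra).
    enough (1 <= (slot_start (S (S j)) - (slot_start j + s * slot_width j)) * k) by nra.
    rewrite Hst. unfold k.
    replace ((slot_start j + slot_width j + slot_width (S j) - (slot_start j + s * slot_width j))
             * (slot_rate j + s * (slot_rate (S j) - slot_rate j)))
      with (1 + s * (1 - s) * (slot_width j * slot_rate (S j) - 1)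
            + slot_width (S j) * (1 - s) * slot_rate j
            + (1 - s) * (1 - s) * (slot_width j * slot_rate j - 1)
            + s * (slot_width (S j) * slot_rate (S j) - 1)) by ring.
    rewrite W1, W2.
    assert (0 <= slot_width (S j) * (1 - s) * slot_rate j) by (apply Rmult_le_pos; nra). nra.
  - set (k := slot_rate (S j) + s * (slot_rate j - slot_rate (S j))). assert (0 < k) by (unfold k; nra).
    enough (1 <= (slot_start (S (S j)) - (slot_start (S j) + s * - slot_width j)) * k) by nra.
    replace (slot_start (S (S j))) with (slot_start (S j) + slot_width (S j)) by (unfold slot_width; ring).
    unfold k.
    replace ((slot_start (S j) + slot_width (S j) - (slot_start (S j) + s * - slot_width j))
             * (slot_rate (S j) + s * (slot_rate j - slot_rate (S j))))
      with (1 + s * (1 - s) * (slot_width j * slot_rate (S j) - 1) + s * slot_width (S j) * slot_rate j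
            + (1 - s) * (slot_width (S j) * slot_rate (S j) - 1)
            + s * s * (slot_width j * slot_rate j - 1)) by ring.
    rewrite W1, W2.
    assert (0 <= s * slot_width (S j) * slot_rate j) by (apply Rmult_le_pos; nra). nra.
Qed.

Lemma swap_window_fst_0 j t : swap_window_fst j 0 t = clamp01 ((t - slot_start j) * slot_rate j).
Proof. unfold swap_window_fst, moving_window. f_equal. ring. Qed.
Lemma swap_window_snd_0 j t :
  swap_window_snd j 0 t = clamp01 ((t - slot_start (S j)) * slot_rate (S j)).
Proof. unfold swap_window_snd, moving_window. f_equal. ring. Qed.
Lemma swap_window_fst_1 j t :
  swap_window_fst j 1 t = clamp01 ((t - slot_start (S j)) * slot_rate (S j)).
Proof. unfold swap_window_fst, moving_window, slot_width. f_equal. ring. Qed.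
Lemma swap_window_snd_1 j t : swap_window_snd j 1 t = clamp01 ((t - slot_start j) * slot_rate j).
Proof. unfold swap_window_snd, moving_window, slot_width. f_equal. ring. Qed.

Lemma clamp01_in_slot k t : slot_start k <= t < slot_start (S k) ->
  clamp01 ((t - slot_start k) * slot_rate k) = concat_local t.
Proof.
  intros H. destruct (concat_in_slot k t H) as [_ [E F]]. rewrite <- E. apply clamp01_id. lra.
Qed.

Lemma clamp01_below_slot k t : t <= slot_start k -> clamp01 ((t - slot_start k) * slot_rate k) = 0.
Proof. intros H. apply clamp01_le0. pose proof (slot_rate_pos k). nra. Qed.

Lemma clamp01_above_slot k t : slot_start (S k) <= t ->
  clamp01 ((t - slot_start k) * slot_rate k) = 1.
Proof. intros H. apply clamp01_ge1. pose proof (slot_width_mul_rate k). pose proof (slot_rate_pos k). nra. Qed.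

Definition swap_adj (j n : nat) : nat :=
  if Nat.eqb n j then S j else if Nat.eqb n (S j) then j else n.

Lemma swap_adj_j j : swap_adj j j = S j.
Proof. unfold swap_adj. rewrite Nat.eqb_refl. auto. Qed.
Lemma swap_adj_Sj j : swap_adj j (S j) = j.
Proof. unfold swap_adj. destruct (Nat.eqb_spec (S j) j); [lia|]. rewrite Nat.eqb_refl. auto. Qed.
Lemma swap_adj_other j n : n <> j -> n <> S j -> swap_adj j n = n.
Proof.
  intros. unfold swap_adj. destruct (Nat.eqb_spec n j); [lia|].
  destruct (Nat.eqb_spec n (S j)); [lia | auto].
Qed.
Lemma swap_adj_involutive j n : swap_adj j (swap_adj j n) = n.
Proof.
  destruct (Nat.eq_dec n j) as [->|D1]; [rewrite swap_adj_j; apply swap_adj_Sj|].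
  destruct (Nat.eq_dec n (S j)) as [->|D2]; [rewrite swap_adj_Sj; apply swap_adj_j|].
  rewrite (swap_adj_other j n D1 D2). apply swap_adj_other; auto.
Qed.

Lemma concat_index_cases j t : 0 <= t < 1 ->
  ((concat_index t < j)%nat /\ t <= slot_start j) \/ concat_index t = j \/
  concat_index t = S j \/ ((S (S j) <= concat_index t)%nat /\ slot_start (S (S j)) <= t).
Proof.
  intros H. destruct (concat_index_spec t H) as [A B].
  destruct (lt_eq_lt_dec (concat_index t) j) as [[C|C]|C]; auto.
  - left. split; auto. pose proof (slot_start_le _ _ C). lra.
  - destruct (Nat.eq_dec (concat_index t) (S j)); auto. right; right; right. split; [lia|].
    pose proof (slot_start_le (S (S j)) (concat_index t) ltac:(lia)). lra.
Qed.

Definition tail_value {M} (e : M) (b : nat -> R -> M) (lo : nat) (t : R) (x : M) : Prop :=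
  x = e \/ exists i u, unit_I u /\ x = b i u /\ ((lo <= i)%nat \/ (t < 1 /\ i = concat_index t)).

Lemma tail_value_running {M} (e : M) b lo t : unit_I t ->
  tail_value e b lo t (inf_concat e b t).
Proof.
  intros Ht. rewrite inf_concat_eq. destruct (Rlt_dec t 1) as [H|H]; [|left; auto].
  right. exists (concat_index t), (concat_local t). split; [apply concat_local_unit; unfold unit_I in *; lra|].
  auto.
Qed.

Lemma tail_value_mono {M} (e : M) b lo lo' t x : (lo' <= lo)%nat ->
  tail_value e b lo t x -> tail_value e b lo' t x.
Proof. intros Hl [Hx|[i [u [Hu [Hx Hi]]]]]; [left; auto | right; exists i, u]. intuition lia. Qed.

Section AdjacentSwap.
Context {M : Type} (T : Topology M) (op : M -> M -> M) (e : M).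
Hypothesis op_e_l : forall x, op e x = x.
Hypothesis op_e_r : forall x, op x e = x.
Hypothesis op_path_continuous : forall a b, path_continuous T a -> path_continuous T b ->
  path_continuous T (fun t => op (a t) (b t)).
Variable b : nat -> R -> M.
Hypothesis b_null : null_sequence T e b.

Let b_0 n : b n 0 = e := proj1 (proj2 (proj1 b_null n)).
Let b_1 n : b n 1 = e := proj2 (proj2 (proj1 b_null n)).

Definition drop_pair (j n : nat) : R -> M :=
  if (Nat.eqb n j || Nat.eqb n (S j))%bool then fun _ => e else b n.

(* Loops [j] and [S j] are taken out of the concatenation and multiplied back
   in on the right, each in its own moving window. *)
Definition swap_homotopy (j : nat) (s t : R) : M :=
  op (inf_concat e (drop_pair j) t)
     (op (b j (swap_window_fst j s t)) (b (S j) (swap_window_snd j s t))).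

Lemma drop_pair_j j : drop_pair j j = fun _ => e.
Proof. unfold drop_pair. rewrite Nat.eqb_refl. auto. Qed.
Lemma drop_pair_Sj j : drop_pair j (S j) = fun _ => e.
Proof. unfold drop_pair. rewrite Nat.eqb_refl, Bool.orb_true_r. auto. Qed.
Lemma drop_pair_other j n : n <> j -> n <> S j -> drop_pair j n = b n.
Proof.
  intros. unfold drop_pair. destruct (Nat.eqb_spec n j); [lia|].
  destruct (Nat.eqb_spec n (S j)); [lia | auto].
Qed.

Lemma null_sequence_drop_pair j : null_sequence T e (drop_pair j).
Proof.
  apply (null_sequence_or_const T e b); auto.
  - intros n. unfold drop_pair. destruct (_ || _)%bool; [apply const_loop | apply b_null].
  - intros n t _. unfold drop_pair. destruct (_ || _)%bool; auto.
Qed.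

Lemma swap_homotopy_continuous j : square_continuous T (swap_homotopy j).
Proof.
  unfold swap_homotopy.
  apply (square_continuous_op T op (fun s t => inf_concat e (drop_pair j) t)); auto.
  - apply square_continuous_snd, inf_concat_continuous, null_sequence_drop_pair.
  - apply (square_continuous_op T op); auto; apply square_continuous_moving_window, b_null.
Qed.

Lemma swap_homotopy_outside j s t : unit_I s -> 0 <= t < 1 ->
  (concat_index t < j \/ S (S j) <= concat_index t)%nat ->
  swap_homotopy j s t = inf_concat e b t.
Proof.
  intros Hs Ht Hout. destruct (concat_index_spec t Ht) as [A B].
  unfold swap_homotopy. rewrite !inf_concat_eq.
  destruct (Rlt_dec t 1) as [_|]; [|lra]. rewrite drop_pair_other by lia.
  destruct Hout as [Hout|Hout].
  - pose proof (slot_start_le _ _ Hout).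
    destruct (swap_windows_below j s t Hs ltac:(lra)) as [E F].
    rewrite E, F, !b_0, op_e_l, op_e_r. auto.
  - pose proof (slot_start_le _ _ Hout).
    destruct (swap_windows_above j s t Hs ltac:(lra)) as [E F].
    rewrite E, F, !b_1, op_e_l, op_e_r. auto.
Qed.

Lemma swap_homotopy_0 j t : unit_I t -> swap_homotopy j 0 t = inf_concat e b t.
Proof.
  intros Ht. pose proof (slot_start_lt1 (S (S j))).
  destruct (Rlt_dec t 1) as [H1|H1].
  2:{ unfold swap_homotopy. rewrite !inf_concat_eq. destruct (Rlt_dec t 1); [lra|].
      destruct (swap_windows_above j 0 t ltac:(unfold unit_I; lra) ltac:(lra)) as [E F].
      rewrite E, F, !b_1, !op_e_l. auto. }
  assert (Ht' : 0 <= t < 1) by (unfold unit_I in *; lra).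
  pose proof (concat_index_spec t Ht') as Hsl.
  destruct (concat_index_cases j t Ht') as [[C D]|[C|[C|[C D]]]];
    try (apply swap_homotopy_outside; [unfold unit_I; lra | lra | lia]).
  - unfold swap_homotopy. rewrite !inf_concat_eq. destruct (Rlt_dec t 1); [|lra].
    rewrite C in *. rewrite drop_pair_j, op_e_l, swap_window_fst_0, swap_window_snd_0.
    rewrite clamp01_in_slot, clamp01_below_slot, b_0, op_e_r by lra. auto.
  - unfold swap_homotopy. rewrite !inf_concat_eq. destruct (Rlt_dec t 1); [|lra].
    rewrite C in *. rewrite drop_pair_Sj, op_e_l, swap_window_fst_0, swap_window_snd_0.
    rewrite clamp01_above_slot, clamp01_in_slot, b_1, op_e_l by lra. auto.
Qed.

Lemma swap_homotopy_1 j t : unit_I t ->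
  swap_homotopy j 1 t = inf_concat e (fun n => b (swap_adj j n)) t.
Proof.
  intros Ht. pose proof (slot_start_lt1 (S (S j))).
  destruct (Rlt_dec t 1) as [H1|H1].
  2:{ unfold swap_homotopy. rewrite !inf_concat_eq. destruct (Rlt_dec t 1); [lra|].
      destruct (swap_windows_above j 1 t ltac:(unfold unit_I; lra) ltac:(lra)) as [E F].
      rewrite E, F, !b_1, !op_e_l. auto. }
  assert (Ht' : 0 <= t < 1) by (unfold unit_I in *; lra).
  pose proof (concat_index_spec t Ht') as Hsl.
  destruct (concat_index_cases j t Ht') as [[C D]|[C|[C|[C D]]]].
  - rewrite swap_homotopy_outside, !inf_concat_eq by (unfold unit_I; lra || lia).
    destruct (Rlt_dec t 1); [|lra]. rewrite swap_adj_other by lia. auto.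
  - unfold swap_homotopy. rewrite !inf_concat_eq. destruct (Rlt_dec t 1); [|lra].
    rewrite C in *. rewrite drop_pair_j, op_e_l, swap_window_fst_1, swap_window_snd_1, swap_adj_j.
    rewrite clamp01_below_slot, clamp01_in_slot, b_0, op_e_l by lra. auto.
  - unfold swap_homotopy. rewrite !inf_concat_eq. destruct (Rlt_dec t 1); [|lra].
    rewrite C in *. rewrite drop_pair_Sj, op_e_l, swap_window_fst_1, swap_window_snd_1, swap_adj_Sj.
    rewrite clamp01_in_slot, clamp01_above_slot, b_1, op_e_r by lra. auto.
  - rewrite swap_homotopy_outside, !inf_concat_eq by (unfold unit_I; lra || lia).
    destruct (Rlt_dec t 1); [|lra]. rewrite swap_adj_other by lia. auto.
Qed.

Lemma swap_homotopy_ends j s : unit_I s -> swap_homotopy j s 0 = e /\ swap_homotopy j s 1 = e.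
Proof.
  intros Hs. unfold swap_homotopy.
  pose proof (slot_start_ge0 j). pose proof (slot_start_lt1 (S (S j))). split.
  - destruct (swap_windows_below j s 0 Hs ltac:(lra)) as [E F].
    rewrite E, F, !b_0, op_e_l, inf_concat_at_0; auto.
    intros n. unfold drop_pair. destruct (_ || _)%bool; auto.
  - destruct (swap_windows_above j s 1 Hs ltac:(lra)) as [E F].
    rewrite E, F, !b_1, op_e_l, inf_concat_at_1; auto.
Qed.

Lemma swap_homotopy_below j s t : unit_I s -> unit_I t -> t < slot_start j ->
  swap_homotopy j s t = inf_concat e b t.
Proof.
  intros Hs Ht C. pose proof (slot_start_lt1 j).
  assert (concat_index t < j)%nat by (apply concat_index_lt; unfold unit_I in *; lra).
  apply swap_homotopy_outside; [exact Hs | unfold unit_I in *; lra | lia].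
Qed.

Lemma swap_homotopy_factors j s t : unit_I s -> unit_I t ->
  exists x y, swap_homotopy j s t = op x y /\ tail_value e b j t x /\ tail_value e b j t y.
Proof.
  intros Hs Ht.
  destruct (Rlt_dec t 1) as [H1|H1].
  2:{ assert (t = 1) by (unfold unit_I in *; lra). subst t.
      exists e, e. rewrite (proj2 (swap_homotopy_ends j s Hs)), op_e_l. split; auto. split; left; auto. }
  assert (Ht' : 0 <= t < 1) by (unfold unit_I in *; lra).
  assert (Hwin : concat_index t = j \/ concat_index t = S j ->
    exists x y, swap_homotopy j s t = op x y /\ tail_value e b j t x /\ tail_value e b j t y).
  { intros Hj. exists (b j (swap_window_fst j s t)), (b (S j) (swap_window_snd j s t)).
    split; [|split; right; eexists _, _; (split; [apply clamp01_unit | split; [reflexivity | left; lia]])].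
    unfold swap_homotopy. rewrite inf_concat_eq. destruct (Rlt_dec t 1); [|lra].
    destruct Hj as [Hj|Hj]; rewrite Hj; [rewrite drop_pair_j | rewrite drop_pair_Sj]; apply op_e_l. }
  destruct (concat_index_cases j t Ht') as [[C _]|[C|[C|[C _]]]]; auto.
  all: exists (inf_concat e b t), e; rewrite op_e_r;
    split; [apply swap_homotopy_outside; auto; lia | split; [apply tail_value_running | left]; auto].
Qed.

End AdjacentSwap.

(** * Bubble sort *)

(* Bubble sort towards [phi]: positions [< sorted] already hold [phi 0], ...;
   the loop [phi sorted] is moved down one position per step. *)
Record arrangement := Arrangement {
  sorted : nat;
  at_pos : nat -> nat;
  pos_of : nat -> nat }.

Section BubbleSort.
Variable phi : nat -> nat.
Hypothesis phi_inj : forall m n, phi m = phi n -> m = n.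

Definition target_pos (x : arrangement) : nat := pos_of x (phi (sorted x)).

Definition sort_step (x : arrangement) : arrangement :=
  if Nat.ltb (sorted x) (target_pos x) then
    Arrangement (sorted x) (fun n => at_pos x (swap_adj (target_pos x - 1) n))
                (fun n => swap_adj (target_pos x - 1) (pos_of x n))
  else Arrangement (S (sorted x)) (at_pos x) (pos_of x).

Definition schedule (m : nat) : arrangement :=
  Nat.iter m sort_step (Arrangement 0 (fun n => n) (fun n => n)).

Definition sort_invariant (x : arrangement) : Prop :=
  (forall n, at_pos x (pos_of x n) = n) /\ (forall n, pos_of x (at_pos x n) = n) /\
  (forall j, (j < sorted x)%nat -> at_pos x j = phi j).

Lemma sorted_le_target x : sort_invariant x -> (sorted x <= target_pos x)%nat.
Proof.
  intros [H1 [H2 H3]]. unfold target_pos.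
  destruct (le_lt_dec (sorted x) (pos_of x (phi (sorted x)))) as [|C]; auto.
  pose proof (H3 _ C) as E. rewrite H1 in E. apply phi_inj in E. lia.
Qed.

Lemma sort_step_invariant x : sort_invariant x -> sort_invariant (sort_step x).
Proof.
  intros HI. pose proof (sorted_le_target x HI) as Hp. destruct HI as [H1 [H2 H3]].
  unfold sort_step. destruct (Nat.ltb_spec (sorted x) (target_pos x)) as [C|C].
  - split; [|split]; simpl.
    + intros n. rewrite swap_adj_involutive. auto.
    + intros n. rewrite H2. apply swap_adj_involutive.
    + intros j Hj. rewrite swap_adj_other by lia. auto.
  - split; [|split]; simpl; auto.
    intros j Hj. destruct (Nat.eq_dec j (sorted x)) as [->|D]; [|apply H3; lia].
    unfold target_pos in *. replace (sorted x) with (pos_of x (phi (sorted x))) at 1 by lia.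
    apply H1.
Qed.

Lemma schedule_invariant m : sort_invariant (schedule m).
Proof.
  unfold schedule. apply Nat.iter_invariant; [apply sort_step_invariant|].
  split; [|split]; simpl; auto. intros; lia.
Qed.

Lemma schedule_S m : schedule (S m) = sort_step (schedule m).
Proof. reflexivity. Qed.

Lemma schedule_sorted_mono m m' : (m <= m')%nat -> (sorted (schedule m) <= sorted (schedule m'))%nat.
Proof.
  induction 1 as [|m' _ IH]; auto. rewrite schedule_S. unfold sort_step.
  destruct (Nat.ltb _ _); simpl; lia.
Qed.

(* Each step either advances [sorted] or decreases the distance to the target. *)
Lemma sort_steps_advance d x : sort_invariant x -> (target_pos x - sorted x = d)%nat ->
  sorted (Nat.iter (S d) sort_step x) = S (sorted x).
Proof.
  revert x. induction d as [|d IH]; intros x HI Hd; pose proof (sorted_le_target x HI).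
  - simpl. unfold sort_step. destruct (Nat.ltb_spec (sorted x) (target_pos x)); simpl; lia.
  - assert (Hs : sort_step x = Arrangement (sorted x)
        (fun n => at_pos x (swap_adj (target_pos x - 1) n))
        (fun n => swap_adj (target_pos x - 1) (pos_of x n))).
    { unfold sort_step. destruct (Nat.ltb_spec (sorted x) (target_pos x)); [auto | lia]. }
    rewrite Nat.iter_succ_r.
    rewrite (IH (sort_step x)); [rewrite Hs; auto | apply sort_step_invariant; auto |].
    rewrite Hs. unfold target_pos. simpl. fold (target_pos x).
    replace (target_pos x) with (S (target_pos x - 1)) at 2 by lia. rewrite swap_adj_Sj. lia.
Qed.

Lemma schedule_sorted_unbounded K : exists m, (K <= sorted (schedule m))%nat.
Proof.
  induction K as [|K [m Hm]]; [exists 0%nat; lia|].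
  destruct (Nat.eq_dec (sorted (schedule m)) K) as [E|E]; [|exists m; lia].
  set (d := (target_pos (schedule m) - sorted (schedule m))%nat).
  exists (S d + m)%nat. unfold schedule. rewrite Nat.iter_add. fold (schedule m).
  rewrite (sort_steps_advance d (schedule m) (schedule_invariant m) eq_refl). lia.
Qed.

End BubbleSort.

(** * The rearranging homotopy *)

Section Reordering.
Context {M : Type} (T : Topology M) (op : M -> M -> M) (e : M).
Hypothesis op_e_l : forall x, op e x = x.
Hypothesis op_e_r : forall x, op x e = x.
Hypothesis op_path_continuous : forall a b, path_continuous T a -> path_continuous T b ->
  path_continuous T (fun t => op (a t) (b t)).
Variable a : nat -> R -> M.
Hypothesis a_null : null_sequence T e a.
Variable phi : nat -> nat.
Hypothesis phi_inj : forall m n, phi m = phi n -> m = n.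
Hypothesis phi_surj : forall m, exists n, phi n = m.

Definition arranged (m : nat) : nat -> R -> M := fun n => a (at_pos (schedule phi m) n).

Definition stage (m : nat) : R -> R -> M :=
  let x := schedule phi m in
  if Nat.ltb (sorted x) (target_pos phi x)
  then swap_homotopy op e (arranged m) (target_pos phi x - 1)
  else fun _ t => inf_concat e (arranged m) t.

Lemma null_sequence_arranged m : null_sequence T e (arranged m).
Proof.
  destruct (schedule_invariant phi phi_inj m) as [H1 [H2 _]].
  unfold arranged. apply null_sequence_reindex; [exact a_null | |].
  - intros x y E. rewrite <- (H2 x), <- (H2 y), E. auto.
  - intros i. exists (pos_of (schedule phi m) i). auto.
Qed.

Lemma stage_continuous m : square_continuous T (stage m).
Proof.
  unfold stage. destruct (Nat.ltb _ _).
  - exact (swap_homotopy_continuous T op e op_path_continuous _ (null_sequence_arranged m) _).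
  - apply square_continuous_snd, inf_concat_continuous, null_sequence_arranged.
Qed.

Lemma stage_0 m t : unit_I t -> stage m 0 t = inf_concat e (arranged m) t.
Proof.
  intros Ht. unfold stage. destruct (Nat.ltb _ _); auto.
  exact (swap_homotopy_0 T op e op_e_l op_e_r _ (null_sequence_arranged m) _ t Ht).
Qed.

Lemma stage_1 m t : unit_I t -> stage m 1 t = stage (S m) 0 t.
Proof.
  intros Ht. rewrite stage_0 by auto. unfold stage, arranged. rewrite schedule_S. unfold sort_step.
  destruct (Nat.ltb _ _); auto.
  exact (swap_homotopy_1 T op e op_e_l op_e_r _ (null_sequence_arranged m) _ t Ht).
Qed.

Lemma stage_ends m s : unit_I s -> stage m s 0 = e /\ stage m s 1 = e.
Proof.
  intros Hs. unfold stage. destruct (Nat.ltb _ _).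
  - exact (swap_homotopy_ends T op e op_e_l _ (null_sequence_arranged m) _ s Hs).
  - split; [apply inf_concat_at_0, (null_sequence_arranged m) | apply inf_concat_at_1].
Qed.

Lemma stage_below_sorted m s t : unit_I s -> unit_I t ->
  t < slot_start (sorted (schedule phi m)) -> stage m s t = inf_concat e (fun n => a (phi n)) t.
Proof.
  intros Hs Ht C.
  destruct (schedule_invariant phi phi_inj m) as [_ [_ Hsorted]].
  assert (E : inf_concat e (arranged m) t = inf_concat e (fun n => a (phi n)) t).
  { pose proof (slot_start_lt1 (sorted (schedule phi m))). rewrite !inf_concat_eq.
    destruct (Rlt_dec t 1); [|lra]. unfold arranged. rewrite Hsorted; auto.
    apply concat_index_lt; unfold unit_I in *; lra. }
  rewrite <- E. unfold stage.
  destruct (Nat.ltb_spec (sorted (schedule phi m)) (target_pos phi (schedule phi m))); auto.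
  apply (swap_homotopy_below T op e op_e_l op_e_r _ (null_sequence_arranged m)); auto.
  assert (Hle : (sorted (schedule phi m) <= target_pos phi (schedule phi m) - 1)%nat) by lia.
  pose proof (slot_start_le _ _ Hle). lra.
Qed.

Lemma stage_factors m s t : unit_I s -> unit_I t -> exists x y, stage m s t = op x y /\
  tail_value e (arranged m) (sorted (schedule phi m)) t x /\
  tail_value e (arranged m) (sorted (schedule phi m)) t y.
Proof.
  intros Hs Ht. unfold stage.
  destruct (Nat.ltb_spec (sorted (schedule phi m)) (target_pos phi (schedule phi m))).
  - destruct (swap_homotopy_factors T op e op_e_l op_e_r _ (null_sequence_arranged m)
      (target_pos phi (schedule phi m) - 1) s t Hs Ht) as [x [y [E [Hx Hy]]]].
    exists x, y. split; auto.
    split; apply (tail_value_mono _ _ (target_pos phi (schedule phi m) - 1)); auto; lia.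
  - exists (inf_concat e (arranged m) t), e. rewrite op_e_r.
    split; auto. split; [apply tail_value_running; auto | left; auto].
Qed.

Lemma arranged_tail_large m K N i : (forall j, (phi j < N)%nat -> (j < K)%nat) ->
  (K <= sorted (schedule phi m))%nat -> (K <= i)%nat -> (N <= at_pos (schedule phi m) i)%nat.
Proof.
  intros HK Hm Hi. destruct (schedule_invariant phi phi_inj m) as [_ [H2 H3]].
  destruct (le_lt_dec N (at_pos (schedule phi m) i)) as [|C]; auto.
  destruct (phi_surj (at_pos (schedule phi m) i)) as [j Ej].
  assert (Hj : (j < K)%nat) by (apply HK; lia).
  rewrite <- H3 in Ej by lia. apply (f_equal (pos_of (schedule phi m))) in Ej.
  rewrite !H2 in Ej. lia.
Qed.

Definition reorder_homotopy (s t : R) : M :=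
  if Rlt_dec s 1 then stage (concat_index s) (concat_local s) t
  else inf_concat e (fun n => a (phi n)) t.

Lemma reorder_homotopy_continuous_inside s t : 0 <= s < 1 -> unit_I t ->
  square_continuous_at T reorder_homotopy s t.
Proof.
  intros Hs Ht U HU HUst. unfold reorder_homotopy in HUst. destruct (Rlt_dec s 1) as [_|]; [|lra].
  destruct (glue_slots_continuous T stage stage_continuous stage_1 U HU s t Hs Ht HUst)
    as [d [Hd Hd']].
  exists d. split; auto. intros s' t' Hs' Ht' A B. destruct (Hd' s' t' Hs' Ht' A B) as [C D].
  unfold reorder_homotopy. destruct (Rlt_dec s' 1); [auto | lra].
Qed.

(* Near [(1, t)] with [t < 1], the stages have already sorted the slots up to
   the one after [t]. *)
Lemma reorder_homotopy_continuous_side t : 0 <= t < 1 ->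
  square_continuous_at T reorder_homotopy 1 t.
Proof.
  intros Ht U HU HUst. unfold reorder_homotopy in HUst. destruct (Rlt_dec 1 1); [lra|].
  set (gam := inf_concat e (fun n => a (phi n))) in *.
  assert (Hgam : path_continuous T gam)
    by (apply inf_concat_continuous, null_sequence_reindex; auto).
  set (k := S (S (concat_index t))).
  destruct (schedule_sorted_unbounded phi phi_inj k) as [m0 Hm0].
  destruct (Hgam U HU t ltac:(unfold unit_I; lra) HUst) as [d0 [Hd0 Hd0']].
  destruct (concat_index_spec t Ht) as [_ I2].
  pose proof (slot_start_lt (S (concat_index t)) k ltac:(unfold k; lia)).
  pose proof (slot_start_lt1 m0).
  destruct (exists_pos_le2 d0 (Rmin (1 - slot_start m0) (slot_start k - t))) as [d [D0 [D1 D2]]];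
    [lra | apply Rmin_pos; lra |].
  pose proof (Rmin_l (1 - slot_start m0) (slot_start k - t)).
  pose proof (Rmin_r (1 - slot_start m0) (slot_start k - t)).
  exists d. split; auto. intros s' t' Hs' Ht' A B.
  pose proof (Rabs_def2 _ _ A). pose proof (Rabs_def2 _ _ B).
  assert (Hgt : U (gam t')) by (apply Hd0'; auto; lra).
  unfold reorder_homotopy. destruct (Rlt_dec s' 1) as [s'1|]; auto.
  assert (Hm : (m0 <= concat_index s')%nat) by (apply concat_index_ge; lra).
  pose proof (schedule_sorted_mono phi m0 _ Hm).
  pose proof (slot_start_le k (sorted (schedule phi (concat_index s'))) ltac:(lia)).
  rewrite stage_below_sorted; auto; [apply concat_local_unit; unfold unit_I in *; lra | lra].
Qed.

(* Near [(1, 1)] all values are products of two values of loops [a n] with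
   [n] large (or [e]), which [null_products_near_e] puts into [U]. *)
Lemma reorder_homotopy_continuous_corner : square_continuous_at T reorder_homotopy 1 1.
Proof.
  intros U HU HUst. unfold reorder_homotopy in HUst. destruct (Rlt_dec 1 1); [lra|].
  rewrite inf_concat_at_1 in HUst.
  destruct (null_products_near_e T op e a op_path_continuous (op_e_l e) a_null U HU HUst)
    as [N HN].
  destruct (bijection_preimage_bounded phi phi_inj phi_surj N) as [K HK].
  destruct (schedule_sorted_unbounded phi phi_inj K) as [m0 Hm0].
  pose proof (slot_start_lt1 m0). pose proof (slot_start_lt1 K).
  destruct (exists_pos_le2 (1 - slot_start m0) (1 - slot_start K)) as [d [D0 [D1 D2]]]; try lra.
  set (large := fun z => z = e \/ exists n u, (N <= n)%nat /\ unit_I u /\ z = a n u).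
  assert (HUl : forall x y, large x -> large y -> U (op x y)).
  { assert (He : e = a N 0) by (symmetry; apply (proj1 a_null N)).
    intros x y [Hx|[n1 [u1 [Hn1 [Hu1 Hx]]]]] [Hy|[n2 [u2 [Hn2 [Hu2 Hy]]]]]; subst x y;
      try rewrite He; apply HN; auto; unfold unit_I; lra. }
  exists d. split; auto. intros s' t' Hs' Ht' A B.
  pose proof (Rabs_def2 _ _ A). pose proof (Rabs_def2 _ _ B).
  unfold reorder_homotopy. destruct (Rlt_dec s' 1) as [s'1|s'1].
  - set (m := concat_index s').
    assert (Hsorted : (K <= sorted (schedule phi m))%nat).
    { pose proof (schedule_sorted_mono phi m0 m ltac:(apply concat_index_ge; lra)). lia. }
    assert (Htail : forall z, tail_value e (arranged m) (sorted (schedule phi m)) t' z -> large z).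
    { intros z [Hz|[i [u [Hu [Hz Hi]]]]]; [left; auto | right].
      exists (at_pos (schedule phi m) i), u. split; auto.
      apply (arranged_tail_large m K); auto.
      destruct Hi as [Hi|[Ht1 Hi]]; [lia | subst i; apply concat_index_ge; lra]. }
    destruct (stage_factors m (concat_local s') t') as [x [y [E [Hx Hy]]]];
      [apply concat_local_unit; unfold unit_I in *; lra | auto |].
    rewrite E. apply HUl; auto.
  - rewrite inf_concat_eq. destruct (Rlt_dec t' 1) as [t'1|t'1].
    + rewrite <- op_e_r. apply HUl; [right | left; auto].
      exists (phi (concat_index t')), (concat_local t').
      split; [|split; [apply concat_local_unit; unfold unit_I in *; lra | auto]].
      destruct (le_lt_dec N (phi (concat_index t'))) as [|C]; auto.
      apply HK in C. pose proof (concat_index_ge K t' ltac:(lra) t'1). lia.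
    + rewrite <- op_e_r. apply HUl; left; auto.
Qed.

Lemma reorder_homotopy_continuous : square_continuous T reorder_homotopy.
Proof.
  apply square_continuous_of_at. intros s t Hs Ht.
  destruct (Rlt_dec s 1) as [s1|s1]; [apply reorder_homotopy_continuous_inside; unfold unit_I in *; lra|].
  assert (s = 1) by (unfold unit_I in *; lra). subst s.
  destruct (Rlt_dec t 1) as [t1|t1];
    [apply reorder_homotopy_continuous_side; unfold unit_I in *; lra|].
  assert (t = 1) by (unfold unit_I in *; lra). subst t.
  apply reorder_homotopy_continuous_corner.
Qed.

Lemma reorder_homotopy_image s t : unit_I s -> unit_I t ->
  set_prod op (path_image (inf_concat e a)) (path_image (inf_concat e a)) (reorder_homotopy s t).
Proof.
  intros Hs Ht.
  assert (Himg : forall b lo z, (forall n u, unit_I u -> path_image (inf_concat e a) (b n u)) ->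
      tail_value e b lo t z -> path_image (inf_concat e a) z).
  { intros b lo z Hb [Hz|[i [u [Hu [Hz _]]]]]; subst z; [apply inf_concat_image_e | auto]. }
  unfold reorder_homotopy. destruct (Rlt_dec s 1) as [s1|s1].
  - destruct (stage_factors (concat_index s) (concat_local s) t) as [x [y [E [Hx Hy]]]];
      [apply concat_local_unit; unfold unit_I in *; lra | auto |].
    assert (Harr : forall n u, unit_I u ->
        path_image (inf_concat e a) (arranged (concat_index s) n u))
      by (intros; unfold arranged; apply (inf_concat_image T); auto).
    exists x, y. split; [eapply Himg; eauto | split; [eapply Himg; eauto | exact E]].
  - exists (inf_concat e (fun n => a (phi n)) t), e.
    split; [|split; [apply inf_concat_image_e | symmetry; apply op_e_r]].
    apply (Himg (fun n => a (phi n)) 0%nat); [intros; apply (inf_concat_image T); auto|].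
    apply tail_value_running; auto.
Qed.

End Reordering.

Theorem mainTheorem10 (M : Type) (T : Topology M) (op : M -> M -> M) (e : M)
  (hM : pre_Delta_monoid T op e) (hpc : path_connected T)
  (a : nat -> R -> M) (ha : null_sequence T e a)
  (phi : nat -> nat) (hphi : bijective_nat phi) :
  exists H : R -> R -> M,
    square_continuous T H /\
    (forall t, unit_I t -> H 0 t = inf_concat e a t) /\
    (forall t, unit_I t -> H 1 t = inf_concat e (fun n => a (phi n)) t) /\
    (forall s, unit_I s -> H s 0 = e /\ H s 1 = e) /\
    (forall s t, unit_I s -> unit_I t ->
       set_prod op (path_image (inf_concat e a)) (path_image (inf_concat e a)) (H s t)).
Proof.
  destruct hM as [_ [op_e_l [op_e_r Hop]]]. destruct hphi as [Hinj Hsur].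
  exists (reorder_homotopy op e a phi). split; [|split; [|split; [|split]]].
  - exact (reorder_homotopy_continuous T op e op_e_l op_e_r Hop a ha phi Hinj Hsur).
  - intros t Ht. unfold reorder_homotopy. destruct (Rlt_dec 0 1) as [_|]; [|lra].
    destruct concat_at_0 as [-> ->].
    exact (stage_0 T op e op_e_l op_e_r a ha phi Hinj 0 t Ht).
  - intros t Ht. unfold reorder_homotopy. destruct (Rlt_dec 1 1); [lra | auto].
  - intros s Hs. unfold reorder_homotopy. destruct (Rlt_dec s 1) as [s1|s1].
    + apply (stage_ends T op e op_e_l a ha phi Hinj), concat_local_unit. unfold unit_I in *; lra.
    + split; [apply inf_concat_at_0; intros n; apply (proj1 ha) | apply inf_concat_at_1].
  - exact (reorder_homotopy_image T op e op_e_l op_e_r a ha phi Hinj).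
Qed.
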